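(* Let $\mathbb{G}$ be a linear array, $\mathbb{U}$ the central ULA of its difference coarray, and $\mathbb{F}_r$ ($r\ge1$) the fractal array generated by $\mathbb{G}$. Fix a coupling limit $q\ge0$ and coupling coefficients $c_0=1,c_1,\dots,c_q\in\mathbb{C}$, with $c_k=0$ for $k>q$. Assume $q<\max(\mathbb{G})$ and $q+\max(\mathbb{G})<|\mathbb{U}|$. Then the coupling leakages of $\mathbb{G}$ and $\mathbb{F}_r$ coincide: $\mathcal{L}_{\mathbb{F}_r}=\mathcal{L}_{\mathbb{G}}$.
   Context: A linear array is a finite set $\mathbb{G}\subset\mathbb{Z}$ with $\min\mathbb{G}=0$; its difference coarray is $\mathbb{D}=\{n_1-n_2:n_1,n_2\in\mathbb{G}\}$; its central ULA $\mathbb{U}$ is the largest set $\{-m,\dots,m\}$ contained in $\mathbb{D}$. The fractal array generated by $\mathbb{G}$ (with $M=|\mathbb{U}|$) is $\mathbb{F}_0=\{0\}$, $\mathbb{F}_{r+1}=\bigcup_{n\in\mathbb{G}}(\mathbb{F}_r+nM^r)$ where $A+t=\{a+t:a\in A\}$. For an array $\mathbb{A}=\{a_1<\dots<a_N\}$, its mutual coupling matrix is the $N\times N$ matrix $\mathbf{C}_{\mathbb{A}}$ with entries $(\mathbf{C}_{\mathbb{A}})_{k,l}=c_{|a_k-a_l|}$ (coefficients depend only on sensor separation, $c_0=1$, and $c_d=0$ for $d>q$). Its coupling leakage is $\mathcal{L}_{\mathbb{A}}=\|\mathbf{C}_{\mathbb{A}}-\mathrm{diag}(\mathbf{C}_{\mathbb{A}})\|_F/\|\mathbf{C}_{\mathbb{A}}\|_F$,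 where $\mathrm{diag}(\mathbf{C})$ zeroes all off-diagonal entries and $\|\cdot\|_F$ is the Frobenius norm. *)

From HB Require Import structures.
From mathcomp Require Import all_boot all_order all_algebra.
Set Implicit Arguments. Unset Strict Implicit. Unset Printing Implicit Defensive.
Import Order.TTheory GRing.Theory Num.Theory.

(* A linear array is represented by a sequence of naturals (read as a set);
   min G = 0 with G ⊂ Z forces G ⊂ N and 0 ∈ G. *)

Definition array_of (s : seq nat) : seq nat := sort leq (undup s).

Definition maxa (G : seq nat) : nat := \max_(n <- G) n.

(* k ∈ difference coarray (for k >= 0): k = n1 - n2 with n1, n2 ∈ G *)
Definition in_coarray (G : seq nat) (k : nat) : bool :=
  has (fun n => (n + k) \in G) G.

(* {-m..m} ⊆ D ; D is symmetric so it suffices to check 0..m *)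
Definition ula_ok (G : seq nat) (m : nat) : bool :=
  [forall k : 'I_m.+1, in_coarray G k].

(* largest m with {-m..m} ⊆ D (necessarily m <= max G) *)
Definition ula_half (G : seq nat) : nat :=
  \max_(m < (maxa G).+1 | ula_ok G m) (m : nat).

Definition ula_size (G : seq nat) : nat := (ula_half G).*2.+1.

Fixpoint fractal (G : seq nat) (M : nat) (r : nat) : seq nat :=
  match r with
  | 0 => [:: 0]
  | r'.+1 => undup (flatten [seq [seq a + n * M ^ r' | a <- fractal G M r'] | n <- G])
  end.

Definition fractal_array (G : seq nat) (r : nat) : seq nat :=
  array_of (fractal G (ula_size G) r).

Definition natdist (m n : nat) : nat := (m - n) + (n - m).

Local Open Scope ring_scope.

Definition coupling_matrix (C : numClosedFieldType) (c : nat -> C) (A : seq nat)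
  : 'M[C]_(size A) :=
  \matrix_(k, l) c (natdist (nth 0%N A k) (nth 0%N A l)).

Definition mdiag (C : numClosedFieldType) n (X : 'M[C]_n) : 'M[C]_n :=
  diag_mx (\row_i X i i).

Definition frob (C : numClosedFieldType) n (X : 'M[C]_n) : C :=
  sqrtC (\sum_i \sum_j `|X i j| ^+ 2).

Definition leakage (C : numClosedFieldType) (c : nat -> C) (A : seq nat) : C :=
  frob (coupling_matrix c A - mdiag (coupling_matrix c A)) / frob (coupling_matrix c A).

From HB Require Import structures.
From mathcomp Require Import all_boot all_order all_algebra.
From mathcomp Require Import zify.
Import Order.TTheory GRing.Theory Num.Theory.
Set Implicit Arguments. Unset Strict Implicit.
Local Open Scope ring_scope.

(* For a duplicate-free array A, the squared Frobenius norms in the leakage are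
   E(A) (off-diagonal coupling energy) and E(A) + |A|, so the leakage only depends
   on the pair (E(A), |A|) and is invariant under scaling both by the same factor.
   F_(r+1) is the disjoint union of the |G| translates F_r + n M^r (n in G),
   M = |U|; since max G + q < M, distinct translates are more than q apart and do not couple, so
   E(F_(r+1)) = |G| E(F_r) and |F_(r+1)| = |G| |F_r|.  Hence (E(F_r), |F_r|) is
   |G|^(r-1) (E(G), |G|). *)

Section CouplingEnergy.
Variable C : numClosedFieldType.
Variable c : nat -> C.

Definition pair_energy (x y : nat) : C := (x != y)%:R * `|c (natdist x y)| ^+ 2.

Definition coupling_energy (A : seq nat) : C :=
  \sum_(x <- A) \sum_(y <- A) pair_energy x y.

Lemma coupling_energy_perm A B : perm_eq A B -> coupling_energy A = coupling_energy B.
Proof.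
move=> pAB; rewrite /coupling_energy (perm_big _ pAB).
by apply: eq_bigr => x _; apply: perm_big.
Qed.

Lemma coupling_energy_ge0 A : 0 <= coupling_energy A.
Proof.
apply: sumr_ge0 => x _; apply: sumr_ge0 => y _.
by rewrite mulr_ge0 ?ler0n ?exprn_ge0 ?normr_ge0.
Qed.

Lemma sum_nth_pairs (A : seq nat) (F : nat -> nat -> C) :
  \sum_(i < size A) \sum_(j < size A) F (nth 0%N A i) (nth 0%N A j)
  = \sum_(x <- A) \sum_(y <- A) F x y.
Proof.
rewrite [RHS](big_nth 0%N) big_mkord; apply: eq_bigr => i _.
by rewrite [RHS](big_nth 0%N) big_mkord.
Qed.

Lemma leakage_uniq (A : seq nat) : uniq A -> c 0%N = 1 ->
  leakage c A = sqrtC (coupling_energy A) / sqrtC (coupling_energy A + (size A)%:R).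
Proof.
move=> uA c0; rewrite /leakage /frob; congr (sqrtC _ / sqrtC _).
  rewrite /coupling_energy -sum_nth_pairs; apply: eq_bigr => i _; apply: eq_bigr => j _.
  rewrite /mdiag !mxE /pair_energy (nth_uniq 0%N (ltn_ord i) (ltn_ord j) uA).
  case: (eqVneq i j) => [->|nij]; first by rewrite subrr normr0 expr0n eqxx mul0r.
  by rewrite nij mulr0n subr0 mul1r.
have -> : (size A)%:R = \sum_(i < size A) \sum_(j < size A) ((i == j)%:R : C).
  rewrite -[in LHS](card_ord (size A)) -sumr_const; apply: eq_bigr => i _.
  rewrite (bigD1 i) //= eqxx big1 ?addr0 // => j /negPf.
  by rewrite eq_sym => ->.
rewrite /coupling_energy -sum_nth_pairs -big_split /=; apply: eq_bigr => i _.
rewrite -big_split /=; apply: eq_bigr => j _.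
rewrite /coupling_matrix !mxE /pair_energy (nth_uniq 0%N (ltn_ord i) (ltn_ord j) uA).
case: (eqVneq i j) => [->|nij]; last by rewrite nij mul1r addr0.
by rewrite /natdist subnn c0 normr1 expr1n eqxx mul0r add0r.
Qed.

Lemma leakage_array_of (X : seq nat) : c 0%N = 1 ->
  leakage c (array_of X) = sqrtC (coupling_energy (undup X))
    / sqrtC (coupling_energy (undup X) + (size (undup X))%:R).
Proof.
move=> c0; have pX : perm_eq (array_of X) (undup X) by rewrite perm_sort.
rewrite leakage_uniq ?sort_uniq ?undup_uniq //.
by rewrite (coupling_energy_perm pX) (perm_size pX).
Qed.

Lemma sqrtC_ratio_scale (x : C) (n k : nat) : 0 <= x -> (0 < k)%N ->
  sqrtC (x *+ k) / sqrtC (x *+ k + (k * n)%:R) = sqrtC x / sqrtC (x + n%:R).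
Proof.
move=> x0 k0; rewrite -[x *+ k]mulr_natl natrM -mulrDr.
rewrite !sqrtCM ?nnegrE ?ler0n ?addr_ge0 // invfM mulrACA divff ?mul1r //.
by rewrite sqrtC_eq0 pnatr_eq0 -lt0n.
Qed.

Lemma natdist_blocks_gt (n n' a a' P q : nat) : n != n' ->
  (a + q < P)%N -> (a' + q < P)%N -> (q < natdist (a + n * P) (a' + n' * P))%N.
Proof.
have block_lt m m' b b' : (m < m')%N -> (b + q < P)%N -> (b + m * P + q < b' + m' * P)%N.
  move=> mm' bP; have : (m.+1 * P <= m' * P)%N by rewrite leq_mul2r mm' orbT.
  rewrite mulSn; lia.
rewrite /natdist; case: (ltngtP n n') => // nn' _ aP a'P.
  by have := block_lt _ _ _ a' nn' aP; lia.
by have := block_lt _ _ _ a nn' a'P; lia.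
Qed.

Lemma undup_blocks (P : nat) (G S : seq nat) : uniq S ->
  (forall a, a \in S -> (a < P)%N) ->
  perm_eq (undup [seq (a + n * P)%N | n <- G, a <- S])
          [seq (a + n * P)%N | n <- undup G, a <- S].
Proof.
move=> uS SP; apply: uniq_perm; rewrite ?undup_uniq //.
  apply: allpairs_uniq; rewrite ?undup_uniq //.
  move=> _ _ /allpairsP[[n a] [_ aS ->]] /allpairsP[[n' a'] [_ a'S ->]] /= e.
  have [nn'|nn'] := eqVneq n n'; first by rewrite nn' in e *; congr (_, _); lia.
  have := natdist_blocks_gt nn' (_ : a + 0 < P)%N (_ : a' + 0 < P)%N.
  rewrite !addn0 => /(_ (SP a aS) (SP a' a'S)).
  by rewrite /natdist e subnn.
by move=> x; rewrite mem_undup; apply: mem_allpairs => // y; rewrite mem_undup.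
Qed.

Lemma coupling_energy_blocks (q P : nat) (G S : seq nat) :
  (forall d, (q < d)%N -> c d = 0) -> uniq G ->
  (forall a, a \in S -> (a + q < P)%N) ->
  coupling_energy [seq (a + n * P)%N | n <- G, a <- S] = coupling_energy S *+ size G.
Proof.
move=> cq uG SP; rewrite -(card_ord (size G)) -sumr_const /coupling_energy.
rewrite big_allpairs_dep /= (big_nth 0%N) big_mkord; apply: eq_bigr => i _.
have nG : nth 0%N G i \in G by rewrite mem_nth.
apply: eq_big_seq => a aS; rewrite big_allpairs_dep /= (bigD1_seq _ nG uG) /=.
rewrite [X in _ + X]big1_seq ?addr0.
  by apply: eq_bigr => a' _; rewrite /pair_energy /natdist !subnDr eqn_add2r.
move=> n' /andP[nn' _]; rewrite big1_seq // => a' a'S.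
rewrite /pair_energy cq ?normr0 ?expr0n ?mulr0 //.
by apply: natdist_blocks_gt; rewrite ?SP // eq_sym.
Qed.

End CouplingEnergy.

Lemma leq_maxa (G : seq nat) x : x \in G -> (x <= maxa G)%N.
Proof. by move=> xG; rewrite /maxa (big_rem x) //= leq_maxl. Qed.

Lemma fractal1 (G : seq nat) M : fractal G M 1 = undup G.
Proof. by rewrite /=; congr undup; elim: G => //= n G ->; rewrite muln1. Qed.

Section Fractal.
Variables (G : seq nat) (M : nat).
Hypothesis maxG_lt : (maxa G < M)%N.

Lemma fractal_bound r x : x \in fractal G M r.+1 -> (x + M <= M ^ r.+1 + maxa G)%N.
Proof.
elim: r x => [|r IH] x.
  by rewrite fractal1 mem_undup => /leq_maxa; rewrite expn1 addnC leq_add2l.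
rewrite mem_undup => /allpairsP[[n a] [/= /leq_maxa nG /IH aM ->]].
have : (n.+1 * M ^ r.+1 <= M * M ^ r.+1)%N by rewrite leq_mul2r; lia.
rewrite mulSn -expnS; lia.
Qed.

Lemma fractalS_perm r :
  perm_eq (fractal G M r.+2) [seq (a + n * M ^ r.+1)%N | n <- undup G, a <- fractal G M r.+1].
Proof.
apply: undup_blocks; first by rewrite undup_uniq.
by move=> a /fractal_bound; lia.
Qed.

Lemma size_fractal r : size (fractal G M r.+1) = (size (undup G) ^ r.+1)%N.
Proof.
elim: r => [|r IH]; first by rewrite fractal1 expn1.
by rewrite (perm_size (fractalS_perm r)) size_allpairs IH [RHS]expnS.
Qed.

Lemma coupling_energy_fractal (C : numClosedFieldType) (c : nat -> C) q r :
  (forall d, (q < d)%N -> c d = 0) -> (maxa G + q < M)%N ->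
  coupling_energy c (fractal G M r.+1) = coupling_energy c (undup G) *+ size (undup G) ^ r.
Proof.
move=> cq maxGq; elim: r => [|r IH]; first by rewrite fractal1.
rewrite (coupling_energy_perm _ (fractalS_perm r)).
rewrite (coupling_energy_blocks cq (undup_uniq G)); last by move=> a /fractal_bound; lia.
by rewrite IH -mulrnA expnSr.
Qed.

End Fractal.

Theorem theorem7 (C : numClosedFieldType) (G : seq nat) (q r : nat) (c : nat -> C)
  (hG0 : 0%N \in G) (hr : (1 <= r)%N)
  (hc0 : c 0%N = 1) (hcq : forall d : nat, (q < d)%N -> c d = 0)
  (hq : (q < maxa G)%N) (hqU : (q + maxa G < ula_size G)%N) :
  leakage c (fractal_array G r) = leakage c (array_of G).
Proof.
have maxGq : (maxa G + q < ula_size G)%N by lia.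
have maxG_lt : (maxa G < ula_size G)%N by lia.
case: r hr => // r _.
rewrite /fractal_array !leakage_array_of // (undup_id (undup_uniq _)).
rewrite (coupling_energy_fractal maxG_lt r hcq maxGq) size_fractal // expnSr.
apply: sqrtC_ratio_scale; first exact: coupling_energy_ge0.
by rewrite expn_gt0 -has_predT; apply/orP; left; apply/hasP; exists 0%N; rewrite ?mem_undup.
Qed.
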